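(* Let $N\ge1$, $\alpha>0$, $\tau_0\ge0$, let $c_1,\dots,c_N\in\mathbb{C}\setminus\{0\}$ and let $\mu_1,\dots,\mu_N\in\mathbb{C}$ be pairwise distinct. Let $h:=\tau_0+2$, $Y:=C([-1,1];\mathbb{C})$, $X:=C([-h,0];Y)$ (supremum norms), $J(x,r):=\sum_{i=1}^Nc_ie^{-\mu_i|x-r|}$, and define $L\in\mathcal{L}(X,Y)$ by $(L\phi)(x):=\int_{-1}^1J(x,r)\,\phi(-\tau_0-|x-r|,r)\,dr$. Let $A$ be the operator on $X$ with $D(A)=\{\phi\in X:\phi'\in X,\ \phi'(0)=-\alpha\phi(0)+L\phi\}$, $A\phi=\phi'$. For $\lambda\in\mathbb{C}$ put $k_j(\lambda):=\lambda+\mu_j$, $\mathcal{S}:=\{\lambda:k_i^2=k_j^2\text{ for some }i\neq j\}$ and $$\mathcal{P}(\rho):=\frac{e^{\lambda\tau_0}(\lambda+\alpha)}{2}\prod_{j=1}^N(\rho^2-k_j(\lambda)^2)+\sum_{i=1}^Nc_ik_i(\lambda)\prod_{j\neq i}(\rho^2-k_j(\lambda)^2).$$ Suppose $\lambda\notin\mathcal{S}$ and that $\mathcal{P}$ has $2N$ distinct roots, denoted $\pm\rho_i(\lambda)$, $i=1,\dots,N$. Define the $2N\times2N$ matrix $$S(\lambda):=\begin{bmatrix}S^-_\lambda&S^+_\lambda\\S^+_\lambda&S^-_\lambda\end{bmatrix},\qquad [S^-_\lambda]_{j,i}:=\frac{e^{\rho_i(\lambda)}}{\lambda+\mu_j-\rho_i(\lambda)},\quad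 [S^+_\lambda]_{j,i}:=\frac{e^{-\rho_i(\lambda)}}{\lambda+\mu_j+\rho_i(\lambda)}.$$ If $\det S(\lambda)=0$ and $k_j(\lambda)\neq\pm\rho_i(\lambda)$ for all $i,j=1,\dots,N$, then $\lambda$ belongs to the point spectrum of $A$, and a corresponding eigenfunction is $\varepsilon_\lambda\otimes q_\lambda$, where $$q_\lambda(x)=\sum_{i=1}^N\big[\gamma_ie^{\rho_i(\lambda)x}+\gamma_{-i}e^{-\rho_i(\lambda)x}\big],\qquad x\in[-1,1],$$ and $\Gamma_\lambda=[\gamma_1,\dots,\gamma_N,\gamma_{-1},\dots,\gamma_{-N}]$ is a non-trivial solution of $S(\lambda)\Gamma_\lambda=0$.
   Context: $(\varepsilon_\lambda\otimes q)(\theta):=e^{\lambda\theta}q$ for $\theta\in[-h,0]$. The operator $A$ generates the semigroup of the linearised neural field equation $\dot V(t)=-\alpha V(t)+LV_t$ on $[-1,1]$ with delay $\tau(x,r)=\tau_0+|x-r|$. *)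

From HB Require Import structures.
From mathcomp Require Import all_boot all_order all_algebra.
From mathcomp Require Import all_classical all_reals all_analysis.
From mathcomp Require Import complex.
Set Implicit Arguments. Unset Strict Implicit. Unset Printing Implicit Defensive.
Import Order.TTheory GRing.Theory Num.Theory.
Local Open Scope ring_scope.
Local Open Scope complex_scope.

Section NeuralFieldDefs.
Variable R : realType.
Local Notation C := R[i].

Definition cexp (z : C) : C :=
  (expR (complex.Re z))%:C * (cos (complex.Im z) +i* sin (complex.Im z)).

Definition cint11 (f : R -> C) : C :=
  (Rintegral (@lebesgue_measure R) [set x : R | -1 <= x <= 1]
      (fun r => complex.Re (f r)))
  +i* (Rintegral (@lebesgue_measure R) [set x : R | -1 <= x <= 1]
      (fun r => complex.Im (f r))).

Definition in_Y (q : R -> C) : Prop :=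
  forall x, -1 <= x <= 1 -> forall e : R, 0 < e -> exists2 d : R, 0 < d &
    forall y, -1 <= y <= 1 -> `|y - x| < d -> `|q y - q x| < e%:C.

(** X = C([-h,0]; Y) with sup norm on Y; elements are phi : theta |-> (x |-> phi theta x) *)
Definition in_X (h : R) (phi : R -> R -> C) : Prop :=
  (forall th, -h <= th <= 0 -> in_Y (phi th)) /\
  (forall th, -h <= th <= 0 -> forall e : R, 0 < e -> exists2 d : R, 0 < d &
    forall th', -h <= th' <= 0 -> `|th' - th| < d ->
      forall x, -1 <= x <= 1 -> `|phi th' x - phi th x| <= e%:C).

(** psi is the derivative of phi : [-h,0] -> Y (in the sup norm of Y;
    one-sided at the endpoints) *)
Definition is_derX (h : R) (phi psi : R -> R -> C) : Prop :=
  forall th, -h <= th <= 0 -> forall e : R, 0 < e -> exists2 d : R, 0 < d &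
    forall t, -h <= th + t <= 0 -> 0 < `|t| < d ->
      forall x, -1 <= x <= 1 ->
        `|(phi (th + t) x - phi th x) / t%:C - psi th x| <= e%:C.

Definition Jker (N : nat) (c mu : 'I_N -> C) (x r : R) : C :=
  \sum_(i < N) c i * cexp (- mu i * (`|x - r|)%:C).

Definition Lop (N : nat) (c mu : 'I_N -> C) (tau0 : R) (phi : R -> R -> C)
    (x : R) : C :=
  cint11 (fun r => Jker c mu x r * phi (- tau0 - `|x - r|) r).

(** phi in D(A) and A phi = psi, where D(A) = {phi in X : phi' in X,
    phi'(0) = -alpha phi(0) + L phi} and A phi = phi' *)
Definition A_graph (N : nat) (alpha tau0 : R) (c mu : 'I_N -> C)
    (phi psi : R -> R -> C) : Prop :=
  let h := tau0 + 2 in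
  [/\ in_X h phi, in_X h psi, is_derX h phi psi &
      forall x, -1 <= x <= 1 ->
        psi 0 x = - alpha%:C * phi 0 x + Lop c mu tau0 phi x].

Definition is_eigenfunction (N : nat) (alpha tau0 : R) (c mu : 'I_N -> C)
    (lam : C) (phi : R -> R -> C) : Prop :=
  A_graph alpha tau0 c mu phi (fun th x => lam * phi th x) /\
  exists th x, [/\ - (tau0 + 2) <= th <= 0, -1 <= x <= 1 & phi th x != 0].

Definition in_point_spectrum (N : nat) (alpha tau0 : R) (c mu : 'I_N -> C)
    (lam : C) : Prop :=
  exists phi, is_eigenfunction alpha tau0 c mu lam phi.

Definition eps_tensor (lam : C) (q : R -> C) : R -> R -> C :=
  fun th x => cexp (lam * th%:C) * q x.

Definition kk (N : nat) (mu : 'I_N -> C) (lam : C) (j : 'I_N) : C := lam + mu j.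

Definition Pchar (N : nat) (alpha tau0 : R) (c mu : 'I_N -> C) (lam rho : C) : C :=
  cexp (lam * tau0%:C) * (lam + alpha%:C) / 2%:R
     * \prod_(j < N) (rho ^+ 2 - kk mu lam j ^+ 2)
  + \sum_(i < N) c i * kk mu lam i
       * \prod_(j < N | j != i) (rho ^+ 2 - kk mu lam j ^+ 2).

Definition Sminus (N : nat) (mu : 'I_N -> C) (lam : C) (rho : 'I_N -> C) : 'M[C]_N :=
  \matrix_(j < N, i < N) (cexp (rho i) / (lam + mu j - rho i)).
Definition Splus (N : nat) (mu : 'I_N -> C) (lam : C) (rho : 'I_N -> C) : 'M[C]_N :=
  \matrix_(j < N, i < N) (cexp (- rho i) / (lam + mu j + rho i)).
Definition Smat (N : nat) (mu : 'I_N -> C) (lam : C) (rho : 'I_N -> C) : 'M[C]_(N + N) :=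
  block_mx (Sminus mu lam rho) (Splus mu lam rho)
           (Splus mu lam rho) (Sminus mu lam rho).

(** q_lam(x) = sum_i gamma_i e^{rho_i x} + gamma_{-i} e^{-rho_i x},
    with Gamma = [gamma_1..gamma_N, gamma_{-1}..gamma_{-N}] *)
Definition qfun (N : nat) (rho : 'I_N -> C) (Gam : 'cV[C]_(N + N)) (x : R) : C :=
  \sum_(i < N) (Gam (lshift N i) 0 * cexp (rho i * x%:C)
                + Gam (rshift N i) 0 * cexp (- rho i * x%:C)).

End NeuralFieldDefs.

(* With phi := eps_lam (x) q one has phi' = lam phi, so phi is an eigenfunction
   of A as soon as it lies in X (q is a continuous combination of exponentials)
   and satisfies the boundary condition phi'(0) = -alpha phi(0) + L phi, i.e.
   L phi = (lam + alpha) q.  Writing J(x,r) e^{-lam (tau0 + |x - r|)} as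
   e^{-lam tau0} sum_i c_i e^{-k_i |x - r|} and splitting the integral at r = x,
   every term e^{-k_i |x - r|} e^{+-rho_l r} integrates to
   2 k_i / (k_i^2 - rho_l^2) e^{+-rho_l x} plus a boundary term from r = -1 and
   one from r = 1.  Summed over l, the boundary terms are the entries of
   S(lam) Gamma and vanish; summed over i, the coefficients of e^{+-rho_l x}
   give lam + alpha because P(rho_l) = 0.  Finally q is not identically zero:
   the 2N exponents +-rho_i are distinct, and sampling q on a fine grid gives
   an invertible Vandermonde system; det S(lam) = 0 provides Gamma != 0. *)

From HB Require Import structures.
From mathcomp Require Import all_boot all_order all_algebra.
From mathcomp Require Import all_classical all_reals all_analysis.
From mathcomp Require Import complex.
From mathcomp Require Import ring lra.
Import Order.TTheory GRing.Theory Num.Theory.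
Import numFieldNormedType.Exports.
Set Implicit Arguments. Unset Strict Implicit.
Local Open Scope ring_scope.
Local Open Scope complex_scope.

Section ComplexExp.
Variable R : realType.
Local Notation C := R[i].
Local Notation Re := (@complex.Re R).
Local Notation Im := (@complex.Im R).

Lemma cReD (u v : C) : Re (u + v) = Re u + Re v. Proof. by case: u; case: v. Qed.
Lemma cImD (u v : C) : Im (u + v) = Im u + Im v. Proof. by case: u; case: v. Qed.
Lemma cReN (u : C) : Re (- u) = - Re u. Proof. by case: u. Qed.
Lemma cImN (u : C) : Im (- u) = - Im u. Proof. by case: u. Qed.
Lemma cReM (u v : C) : Re (u * v) = Re u * Re v - Im u * Im v.
Proof. by case: u; case: v. Qed.
Lemma cImM (u v : C) : Im (u * v) = Re u * Im v + Im u * Re v.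
Proof. by case: u; case: v. Qed.
Lemma cReMr (u : C) (t : R) : Re (u * t%:C) = Re u * t.
Proof. by rewrite cReM /= mulr0 subr0. Qed.
Lemma cImMr (u : C) (t : R) : Im (u * t%:C) = Im u * t.
Proof. by rewrite cImM /= mulr0 add0r. Qed.

Lemma complex_eqP (u v : C) : Re u = Re v -> Im u = Im v -> u = v.
Proof. by case: u => a b; case: v => c d /= -> ->. Qed.

Lemma Re_cexp (w : C) : Re (cexp w) = expR (Re w) * cos (Im w).
Proof. by rewrite /cexp cReM /= mul0r subr0. Qed.
Lemma Im_cexp (w : C) : Im (cexp w) = expR (Re w) * sin (Im w).
Proof. by rewrite /cexp cImM /= mul0r addr0. Qed.

Lemma cexpD (u v : C) : cexp (u + v) = cexp u * cexp v.
Proof.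
apply: complex_eqP.
  by rewrite [RHS]cReM !Re_cexp !Im_cexp cReD cImD expRD cosD; ring.
by rewrite [RHS]cImM !Re_cexp !Im_cexp cReD cImD expRD sinD; ring.
Qed.

Lemma cexp0 : cexp (0 : C) = 1.
Proof.
by apply: complex_eqP; rewrite ?Re_cexp ?Im_cexp /= expR0 ?cos0 ?sin0 ?mulr1 ?mulr0.
Qed.

Lemma cexp_neq0 (u : C) : cexp u != 0.
Proof.
apply/eqP => u0; have := cexp0; rewrite -(addNr u) cexpD u0 mulr0 => /eqP.
by rewrite eq_sym oner_eq0.
Qed.

Lemma cexpN (u : C) : cexp (- u) = (cexp u)^-1.
Proof.
by apply: (mulIf (cexp_neq0 u)); rewrite -cexpD addNr cexp0 mulVf ?cexp_neq0.
Qed.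

Lemma cexpMn (u : C) n : cexp (u *+ n) = cexp u ^+ n.
Proof. by elim: n => [|n IH]; rewrite ?cexp0 // mulrS exprS cexpD IH. Qed.

Lemma norm_cexp (w : C) : `|cexp w| = (expR (Re w))%:C.
Proof.
rewrite normc_def Re_cexp Im_cexp !exprMn -mulrDr cos2Dsin2 mulr1 sqrtr_sqr.
by rewrite gtr0_norm ?expR_gt0.
Qed.

End ComplexExp.

Section ComplexCalculus.
Variable R : realType.
Local Notation C := R[i].
Local Notation Re := (@complex.Re R).
Local Notation Im := (@complex.Im R).

Definition is_cderive (F : R -> C) (r : R) (d : C) : Prop :=
  is_derive r 1 (fun t => Re (F t)) (Re d) /\
  is_derive r 1 (fun t => Im (F t)) (Im d).

Definition ccontinuous (F : R -> C) : Prop :=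
  continuous (fun t => Re (F t)) /\ continuous (fun t => Im (F t)).

Lemma is_cderive_eq F (r : R) (d d' : C) :
  is_cderive F r d -> d = d' -> is_cderive F r d'.
Proof. by move=> ? <-. Qed.

Lemma is_cderive_cst (k : C) (r : R) : is_cderive (fun _ => k) r 0.
Proof. by split; apply: is_derive_cst. Qed.

Lemma is_cderive_real (f : R -> R) (r d : R) :
  is_derive r 1 f d -> is_cderive (fun t => (f t)%:C) r d%:C.
Proof. by split => //; apply: is_derive_cst. Qed.

Lemma is_cderiveD F G (r : R) dF dG : is_cderive F r dF -> is_cderive G r dG ->
  is_cderive (fun t => F t + G t) r (dF + dG).
Proof.
move=> [F1 F2] [G1 G2]; split.
- under eq_fun do rewrite cReD.
  by apply: is_derive_eq (is_deriveD F1 G1) _; rewrite cReD.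
- under eq_fun do rewrite cImD.
  by apply: is_derive_eq (is_deriveD F2 G2) _; rewrite cImD.
Qed.

Lemma is_cderiveM F G (r : R) dF dG : is_cderive F r dF -> is_cderive G r dG ->
  is_cderive (fun t => F t * G t) r (dF * G r + F r * dG).
Proof.
move=> [F1 F2] [G1 G2]; split.
- have -> : (fun t => Re (F t * G t)) =
    ((fun t => Re (F t)) * (fun t => Re (G t))
     - (fun t => Im (F t)) * (fun t => Im (G t)))%R.
    by apply: funext => t; rewrite cReM.
  apply: is_derive_eq (is_deriveB (is_deriveM F1 G1) (is_deriveM F2 G2)) _.
  by rewrite cReD !cReM /GRing.scale /=; ring.
- have -> : (fun t => Im (F t * G t)) =
    ((fun t => Re (F t)) * (fun t => Im (G t))
     + (fun t => Im (F t)) * (fun t => Re (G t)))%R.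
    by apply: funext => t; rewrite cImM.
  apply: is_derive_eq (is_deriveD (is_deriveM F1 G2) (is_deriveM F2 G1)) _.
  by rewrite cImD !cImM /GRing.scale /=; ring.
Qed.

Lemma is_cderiveZ (k : C) F (r : R) d : is_cderive F r d ->
  is_cderive (fun t => k * F t) r (k * d).
Proof.
move=> dF; apply: is_cderive_eq (is_cderiveM (is_cderive_cst k r) dF) _.
by rewrite mul0r add0r.
Qed.

Lemma is_derive_scale (a r : R) : is_derive r 1 (fun t => a * t) a.
Proof.
by apply: is_derive_eq (is_deriveZ a (is_derive_id r 1)) _; rewrite /GRing.scale /= mulr1.
Qed.

Lemma is_cderive_cexp (z : C) (r : R) :
  is_cderive (fun t => cexp (z * t%:C)) r (z * cexp (z * r%:C)).
Proof.
pose a := Re z; pose b := Im z.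
have Eexp : is_derive r 1 (fun t => expR (a * t)) (expR (a * r) * a).
  exact: (@is_derive1_comp R expR _ r _ _ _ (is_derive_scale a r)).
have Ecos : is_derive r 1 (fun t => cos (b * t)) (- sin (b * r) * b).
  exact: (@is_derive1_comp R cos _ r _ _ _ (is_derive_scale b r)).
have Esin : is_derive r 1 (fun t => sin (b * t)) (cos (b * r) * b).
  exact: (@is_derive1_comp R sin _ r _ _ _ (is_derive_scale b r)).
have Ecis : is_cderive (fun t => cos (b * t) +i* sin (b * t)) r
    ((- sin (b * r) * b) +i* (cos (b * r) * b)) by [].
apply: is_cderive_eq.
  by rewrite /cexp; under eq_fun do rewrite cReMr cImMr;
     exact: is_cderiveM (is_cderive_real Eexp) Ecis.
rewrite /cexp cReMr cImMr; apply: complex_eqP; rewrite /= ?cReM ?cImM /= -/a -/b; ring.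
Qed.

Lemma continuous_of_derive (f : R -> R) :
  (forall x : R, exists d : R, is_derive x 1 f d) -> continuous f.
Proof.
move=> f'x x; have [d [fx _]] := f'x x.
by apply/differentiable_continuous/derivable1_diffP.
Qed.

Lemma ccontinuous_of_cderive (F : R -> C) :
  (forall x : R, exists d, is_cderive F x d) -> ccontinuous F.
Proof.
by move=> F'x; split; apply: continuous_of_derive => x; have [d [F1 F2]] := F'x x;
  [exists (Re d) | exists (Im d)].
Qed.

Lemma ccontinuous_cst (k : C) : ccontinuous (fun _ => k).
Proof. by split => x; apply: cst_continuous. Qed.

Lemma ccontinuousD (F G : R -> C) : ccontinuous F -> ccontinuous G ->
  ccontinuous (fun t => F t + G t).
Proof.
move=> [F1 F2] [G1 G2]; split => x.
- by under eq_fun do rewrite cReD; exact: (continuousD (F1 x) (G1 x)).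
- by under eq_fun do rewrite cImD; exact: (continuousD (F2 x) (G2 x)).
Qed.

Lemma ccontinuousM (F G : R -> C) : ccontinuous F -> ccontinuous G ->
  ccontinuous (fun t => F t * G t).
Proof.
move=> [F1 F2] [G1 G2]; split => x.
- under eq_fun do rewrite cReM.
  exact: (continuousB (continuousM (F1 x) (G1 x)) (continuousM (F2 x) (G2 x))).
- under eq_fun do rewrite cImM.
  exact: (continuousD (continuousM (F1 x) (G2 x)) (continuousM (F2 x) (G1 x))).
Qed.

Lemma ccontinuous_sum (I : Type) (s : seq I) (P : pred I) (F : I -> R -> C) :
  (forall i, P i -> ccontinuous (F i)) ->
  ccontinuous (fun t => \sum_(i <- s | P i) F i t).
Proof.
rewrite -fct_sumE; apply: big_ind; first exact: ccontinuous_cst.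
exact: ccontinuousD.
Qed.

Lemma ccontinuous_cexp (z : C) : ccontinuous (fun t => cexp (z * t%:C)).
Proof. by apply: ccontinuous_of_cderive => x; eexists; exact: is_cderive_cexp. Qed.

Lemma ccontinuous_cexp_comp (z : C) (f : R -> R) : continuous f ->
  ccontinuous (fun t => cexp (z * (f t)%:C)).
Proof.
move=> cf; have [E1 E2] := ccontinuous_cexp z.
by split => x; [exact: (continuous_comp (cf x) (E1 (f x))) |
  exact: (continuous_comp (cf x) (E2 (f x)))].
Qed.

End ComplexCalculus.

Section SplitIntegral.
Variable R : realType.
Local Notation C := R[i].
Local Notation Re := (@complex.Re R).
Local Notation Im := (@complex.Im R).
Local Notation mu := (@lebesgue_measure R).

Lemma Rintegral_primitive (g f F : R -> R) (a b : R) : a <= b ->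
  (forall r, a <= r <= b -> g r = f r) -> continuous f ->
  (forall r : R, is_derive r 1 F (f r)) ->
  (\int[mu]_(x in `[a, b]) g x)%classic = F b - F a.
Proof.
move=> ab gf cf F'f.
have -> : (\int[mu]_(x in `[a, b]) g x)%classic = (\int[mu]_(x in `[a, b]) f x)%classic.
  by apply: eq_Rintegral => r; rewrite inE /= in_itv /=; apply: gf.
have cF : continuous F by apply: continuous_of_derive => x; exists (f x).
have [<-|nab] := eqVneq a b; first by rewrite set_itv1 Rintegral_set1 subrr.
have lab : a < b by rewrite lt_neqAle nab.
rewrite /Rintegral (@continuous_FTC2 _ f F a b lab (continuous_subspaceT cf)) -?EFinB //.
- split; first by move=> x _; case: (F'f x).
  + exact: cvg_at_right_filter (cF a).
  + exact: cvg_at_left_filter (cF b).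
- by move=> x _; rewrite derive1E; case: (F'f x).
Qed.

Lemma Rintegral_split (g fL fR FL FR : R -> R) (a x b : R) : a <= x <= b ->
  continuous g ->
  (forall r, a <= r <= x -> g r = fL r) -> (forall r, x <= r <= b -> g r = fR r) ->
  continuous fL -> continuous fR ->
  (forall r : R, is_derive r 1 FL (fL r)) -> (forall r : R, is_derive r 1 FR (fR r)) ->
  (\int[mu]_(r in [set r : R | a <= r <= b]) g r)%classic = (FL x - FL a) + (FR b - FR x).
Proof.
move=> /andP[ax xb] cg gL gR cL cR FL' FR'.
rewrite -set_itvcc.
have int_g : mu.-integrable `[a, b] (EFin \o g).
  apply: continuous_compact_integrable; first exact: segment_compact.
  exact: continuous_subspaceT.
have := @Rintegral_itvB R g (BLeft a) (BRight b) x int_g; rewrite !bnd_simp => /(_ ax xb).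
rewrite Rintegral_itv_obnd_cbnd; last first.
  by apply: integrableS int_g => //; apply: subset_itvr; rewrite bnd_simp.
rewrite (Rintegral_primitive ax gL cL FL') (Rintegral_primitive xb gR cR FR') => <-.
by rewrite subrKC.
Qed.

(* [I] is the integral of [h] over [-1, 1], certified by primitives of [h] on
   [-1, x] and on [x, 1]: this is how the kink of [|x - r|] at [r = x] is handled. *)
Definition split_integral (x : R) (h : R -> C) (I : C) : Prop :=
  exists hL hR HL HR : R -> C,
  [/\ (forall r, -1 <= r <= x -> h r = hL r), (forall r, x <= r <= 1 -> h r = hR r),
      ccontinuous hL /\ ccontinuous hR,
      (forall r, is_cderive HL r (hL r)) /\ (forall r, is_cderive HR r (hR r)) &
      I = (HL x - HL (-1)) + (HR 1 - HR x)].

Lemma split_integral_cint11 x h I : -1 <= x <= 1 -> ccontinuous h ->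
  split_integral x h I -> cint11 h = I.
Proof.
move=> hx [h1 h2] [hL [hR [HL [HR [hhL hhR [[cL1 cL2] [cR1 cR2]] [HL' HR'] ->]]]]].
rewrite /cint11; apply: complex_eqP; rewrite /= ?cReD ?cImD ?cReN ?cImN.
- apply: (Rintegral_split (FL := fun r => Re (HL r)) (FR := fun r => Re (HR r)) hx h1
    _ _ cL1 cR1) => [r /hhL -> | r /hhR -> | r | r] //.
  + by case: (HL' r).
  + by case: (HR' r).
- apply: (Rintegral_split (FL := fun r => Im (HL r)) (FR := fun r => Im (HR r)) hx h2
    _ _ cL2 cR2) => [r /hhL -> | r /hhR -> | r | r] //.
  + by case: (HL' r).
  + by case: (HR' r).
Qed.

Lemma split_integral0 x : split_integral x (fun _ => 0) 0.
Proof.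
exists (fun _ => 0), (fun _ => 0), (fun _ => 0), (fun _ => 0); split => //.
- by split; apply: ccontinuous_cst.
- by split => r; apply: is_cderive_cst.
- by rewrite !subrr addr0.
Qed.

Lemma split_integralD x h1 h2 I1 I2 :
  split_integral x h1 I1 -> split_integral x h2 I2 ->
  split_integral x (fun r => h1 r + h2 r) (I1 + I2).
Proof.
move=> [hL [hR [HL [HR [e1 e2 [c1 c2] [d1 d2] ->]]]]].
move=> [hL' [hR' [HL' [HR' [e1' e2' [c1' c2'] [d1' d2'] ->]]]]].
exists (fun r => hL r + hL' r), (fun r => hR r + hR' r),
  (fun r => HL r + HL' r), (fun r => HR r + HR' r); split.
- by move=> r hr; rewrite e1 // e1'.
- by move=> r hr; rewrite e2 // e2'.
- by split; apply: ccontinuousD.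
- by split => r; apply: is_cderiveD.
- by ring.
Qed.

Lemma split_integralZ x (a : C) h I :
  split_integral x h I -> split_integral x (fun r => a * h r) (a * I).
Proof.
move=> [hL [hR [HL [HR [e1 e2 [c1 c2] [d1 d2] ->]]]]].
exists (fun r => a * hL r), (fun r => a * hR r),
  (fun r => a * HL r), (fun r => a * HR r); split.
- by move=> r hr; rewrite e1.
- by move=> r hr; rewrite e2.
- by split; apply: ccontinuousM => //; apply: ccontinuous_cst.
- by split => r; apply: is_cderiveZ.
- by ring.
Qed.

Lemma split_integral_sum x (I : Type) (s : seq I) (P : pred I) (h : I -> R -> C)
    (J : I -> C) : (forall i, P i -> split_integral x (h i) (J i)) ->
  split_integral x (fun r => \sum_(i <- s | P i) h i r) (\sum_(i <- s | P i) J i).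
Proof.
rewrite -fct_sumE; apply: (big_ind2 (split_integral x)).
- exact: split_integral0.
- by move=> ? ? ? ?; apply: split_integralD.
Qed.

End SplitIntegral.

Section ExpAbsIntegral.
Variable R : realType.
Local Notation C := R[i].

Lemma continuous_dist (x : R) : continuous (fun r : R => `|x - r|).
Proof.
move=> r; apply: (continuous_comp (f := fun r => x - r) (g := Num.norm)).
  by apply: continuousB; [exact: cst_continuous | done].
exact: norm_continuous.
Qed.

Definition expabs (x : R) (k s : C) (r : R) : C :=
  cexp (- k * (`|x - r|)%:C) * cexp (s * r%:C).

Lemma ccontinuous_expabs x k s : ccontinuous (expabs x k s).
Proof.
rewrite /expabs; apply: ccontinuousM; last exact: ccontinuous_cexp.
exact: ccontinuous_cexp_comp (@continuous_dist x).
Qed.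

Definition int_expabs (x : R) (k s : C) : C :=
  cexp (s * x%:C) * (2%:R * k / ((k - s) * (k + s)))
  - cexp (- k * (x + 1)%:C) * (cexp (- s) / (k + s))
  - cexp (k * (x - 1)%:C) * (cexp s / (k - s)).

Lemma split_integral_expabs (x : R) (k s : C) : k + s != 0 -> k - s != 0 ->
  split_integral x (expabs x k s) (int_expabs x k s).
Proof.
move=> kDs kBs; have sBk : s - k != 0 by rewrite -opprB oppr_eq0.
exists (fun r => cexp (- k * x%:C) * cexp ((k + s) * r%:C)),
  (fun r => cexp (k * x%:C) * cexp ((s - k) * r%:C)),
  (fun r => cexp (- k * x%:C) / (k + s) * cexp ((k + s) * r%:C)),
  (fun r => cexp (k * x%:C) / (s - k) * cexp ((s - k) * r%:C)); split.
- move=> r /andP[_ rx]; rewrite /expabs ger0_norm ?subr_ge0 // -!cexpD.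
  by congr cexp; rewrite rmorphB; ring.
- move=> r /andP[xr _]; rewrite /expabs distrC ger0_norm ?subr_ge0 // -!cexpD.
  by congr cexp; rewrite rmorphB; ring.
- by split; apply: ccontinuousM; [exact: ccontinuous_cst | exact: ccontinuous_cexp
    | exact: ccontinuous_cst | exact: ccontinuous_cexp].
- split => r; apply: is_cderive_eq (is_cderiveZ _ (is_cderive_cexp _ r)) _.
  + by field.
  + by field.
- have eLx : cexp (- k * x%:C) * cexp ((k + s) * x%:C) = cexp (s * x%:C).
    by rewrite -cexpD; congr cexp; ring.
  have eRx : cexp (k * x%:C) * cexp ((s - k) * x%:C) = cexp (s * x%:C).
    by rewrite -cexpD; congr cexp; ring.
  have eL1 : cexp (- k * x%:C) * cexp ((k + s) * (-1)%:C) =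
      cexp (- k * (x + 1)%:C) * cexp (- s).
    by rewrite -!cexpD; congr cexp; rewrite rmorphD rmorphN rmorph1; ring.
  have eR1 : cexp (k * x%:C) * cexp ((s - k) * 1%:C) = cexp (k * (x - 1)%:C) * cexp s.
    by rewrite -!cexpD; congr cexp; rewrite rmorphB rmorph1; ring.
  rewrite /int_expabs ![cexp (- k * x%:C) / _ * _]mulrAC ![cexp (k * x%:C) / _ * _]mulrAC.
  rewrite eLx eRx eL1 eR1; field.
  by rewrite kDs kBs sBk.
Qed.

End ExpAbsIntegral.

Section BoundaryCondition.
Variable R : realType.
Local Notation C := R[i].
Variables (N : nat) (alpha tau0 : R) (c mu : 'I_N -> C) (lam : C) (rho : 'I_N -> C).
Variable Gam : 'cV[C]_(N + N).
Local Notation k := (kk mu lam).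
Local Notation gp l := (Gam (lshift N l) 0).
Local Notation gm l := (Gam (rshift N l) 0).

(* Dividing P(z) by prod_j (z^2 - k_j^2) turns the root condition into a
   partial fraction identity. *)
Lemma Pchar_root_sum (z : C) : Pchar alpha tau0 c mu lam z = 0 ->
  (forall i, k i - z != 0 /\ k i + z != 0) ->
  cexp (- lam * tau0%:C) * \sum_(i < N) c i * (2%:R * k i / ((k i - z) * (k i + z)))
   = lam + alpha%:C.
Proof.
move=> Pz0 kz.
pose D j := z ^+ 2 - k j ^+ 2.
have DE j : D j = - ((k j - z) * (k j + z)) by rewrite /D; ring.
have D_neq0 j : D j != 0 by have [? ?] := kz j; rewrite DE oppr_eq0 mulf_neq0.
set A := cexp (lam * tau0%:C) * (lam + alpha%:C) / 2%:R.
have PE : Pchar alpha tau0 c mu lam z =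
    \prod_(j < N) D j * (A + \sum_(i < N) c i * k i / D i).
  rewrite /Pchar -/A mulrDr [A * _]mulrC; congr (_ + _).
  rewrite mulr_sumr; apply: eq_bigr => i _.
  by rewrite [in RHS](bigD1 i) //=; field; exact: D_neq0.
have sumE : \sum_(i < N) c i * k i / D i = - A.
  have /negbTE PD : \prod_(j < N) D j != 0 by apply/prodf_neq0 => j _.
  by move: Pz0; rewrite PE => /eqP; rewrite mulf_eq0 PD /= addrC addr_eq0 => /eqP.
rewrite (eq_bigr (fun i => - 2%:R * (c i * k i / D i))); last first.
  by move=> i _; have [? ?] := kz i; rewrite DE; field; apply/andP.
rewrite -mulr_sumr sumE /A [- lam * _]mulNr cexpN.
by field; rewrite cexp_neq0.
Qed.


Lemma Smat_mulmx_top : Smat mu lam rho *m Gam = 0 -> forall i,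
  \sum_(l < N) (gp l * (cexp (rho l) / (k i - rho l))
              + gm l * (cexp (- rho l) / (k i + rho l))) = 0.
Proof.
move=> SGam0 i; have := congr1 (fun M : 'cV[C]_(N + N) => M (lshift N i) 0) SGam0.
rewrite !mxE big_split_ord /= /Smat.
under eq_bigr do rewrite block_mxEul mxE.
under [X in _ + X]eq_bigr do rewrite block_mxEur mxE.
rewrite -big_split /= => SGi; rewrite -[RHS]SGi.
by apply: eq_bigr => l _; rewrite /kk; ring.
Qed.

Lemma Smat_mulmx_bottom : Smat mu lam rho *m Gam = 0 -> forall i,
  \sum_(l < N) (gp l * (cexp (- rho l) / (k i + rho l))
              + gm l * (cexp (rho l) / (k i - rho l))) = 0.
Proof.
move=> SGam0 i; have := congr1 (fun M : 'cV[C]_(N + N) => M (rshift N i) 0) SGam0.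
rewrite !mxE big_split_ord /= /Smat.
under eq_bigr do rewrite block_mxEdl mxE.
under [X in _ + X]eq_bigr do rewrite block_mxEdr mxE.
rewrite -big_split /= => SGi; rewrite -[RHS]SGi.
by apply: eq_bigr => l _; rewrite /kk; ring.
Qed.

Local Notation E := (cexp (- lam * tau0%:C)).

Lemma Lop_integrandE (x r : R) :
  Jker c mu x r * eps_tensor lam (qfun rho Gam) (- tau0 - `|x - r|) r =
  \sum_(i < N) \sum_(l < N)
     (c i * E * gp l * expabs x (k i) (rho l) r
    + c i * E * gm l * expabs x (k i) (- rho l) r).
Proof.
rewrite /Jker /eps_tensor /qfun mulr_suml; apply: eq_bigr => i _.
rewrite !mulr_sumr; apply: eq_bigr => l _; rewrite /expabs.
have delay : cexp (- mu i * (`|x - r|)%:C) * cexp (lam * (- tau0 - `|x - r|)%:C) =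
    E * cexp (- k i * (`|x - r|)%:C).
  by rewrite -!cexpD; congr cexp; rewrite /kk rmorphB rmorphN; ring.
transitivity (c i * (cexp (- mu i * (`|x - r|)%:C) * cexp (lam * (- tau0 - `|x - r|)%:C))
  * (gp l * cexp (rho l * r%:C) + gm l * cexp (- rho l * r%:C))); first by ring.
by rewrite delay; ring.
Qed.

(* Each integral splits into a multiple of e^{+-rho_l x}, a boundary term at
   r = -1 and one at r = 1. *)
Lemma int_expabs_pairE (x : R) (i l : 'I_N) :
  k i - rho l != 0 -> k i + rho l != 0 ->
  c i * E * gp l * int_expabs x (k i) (rho l)
  + c i * E * gm l * int_expabs x (k i) (- rho l) =
  (gp l * cexp (rho l * x%:C) + gm l * cexp (- rho l * x%:C)) *
    (E * (c i * (2%:R * k i / ((k i - rho l) * (k i + rho l)))))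
  - c i * E * cexp (- k i * (x + 1)%:C) *
    (gp l * (cexp (- rho l) / (k i + rho l)) + gm l * (cexp (rho l) / (k i - rho l)))
  - c i * E * cexp (k i * (x - 1)%:C) *
    (gp l * (cexp (rho l) / (k i - rho l)) + gm l * (cexp (- rho l) / (k i + rho l))).
Proof. by move=> kBr kDr; rewrite /int_expabs !opprK; field; rewrite kBr kDr. Qed.

Lemma Lop_eps_tensor_qfun (x : R) : -1 <= x <= 1 ->
  (forall l i, k i != rho l /\ k i != - rho l) ->
  (forall l, Pchar alpha tau0 c mu lam (rho l) = 0) ->
  Smat mu lam rho *m Gam = 0 ->
  Lop c mu tau0 (eps_tensor lam (qfun rho Gam)) x = (lam + alpha%:C) * qfun rho Gam x.
Proof.
move=> hx krho Prho0 SGam0.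
have kBr i l : k i - rho l != 0 by rewrite subr_eq0; case: (krho l i).
have kDr i l : k i + rho l != 0 by rewrite addr_eq0; case: (krho l i).
have -> : Lop c mu tau0 (eps_tensor lam (qfun rho Gam)) x =
    \sum_(i < N) \sum_(l < N) (c i * E * gp l * int_expabs x (k i) (rho l)
                            + c i * E * gm l * int_expabs x (k i) (- rho l)).
  rewrite /Lop (eq_fun (Lop_integrandE x)).
  apply: split_integral_cint11 hx _ _.
    apply: ccontinuous_sum => i _; apply: ccontinuous_sum => l _.
    by apply: ccontinuousD; apply: ccontinuousM;
      (apply: ccontinuous_cst || apply: ccontinuous_expabs).
  apply: split_integral_sum => i _; apply: split_integral_sum => l _.
  apply: split_integralD; apply: split_integralZ; apply: split_integral_expabs => //.
  by rewrite opprK.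
under eq_bigr do under eq_bigr do rewrite int_expabs_pairE //.
under eq_bigr do rewrite !sumrB.
rewrite !sumrB [X in _ - X - _]big1 => [|i _]; last first.
  by rewrite -mulr_sumr Smat_mulmx_bottom // mulr0.
rewrite [X in _ - X]big1 => [|i _]; last by rewrite -mulr_sumr Smat_mulmx_top // mulr0.
rewrite !subr0 exchange_big /qfun mulr_sumr; apply: eq_bigr => l _.
rewrite -2!mulr_sumr (Pchar_root_sum (Prho0 l)) => [|i]; first exact: mulrC.
exact: conj (kBr i l) (kDr i l).
Qed.

End BoundaryCondition.

Section EpsilonDelta.
Variable R : realType.
Local Notation C := R[i].
Local Notation Re := (@complex.Re R).
Local Notation Im := (@complex.Im R).

Lemma continuous_at_epsilon (f : R -> R) (x : R) : {for x, continuous f} ->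
  forall e : R, 0 < e -> exists2 d : R, 0 < d &
    forall y, `|y - x| < d -> `|f y - f x| < e.
Proof.
move=> /cvgrPdist_lt fx e /fx /nbhs_ballP[d /= d0 xd].
by exists d => // y yx; rewrite distrC; apply: xd; rewrite -ball_normE /= distrC.
Qed.

Lemma is_derive_epsilon (f : R -> R) (x df : R) : is_derive x 1 f df ->
  forall e : R, 0 < e -> exists2 d : R, 0 < d &
    forall t, 0 < `|t| < d -> `|(f (x + t) - f x) / t - df| < e.
Proof.
move=> [/cvgrPdist_lt fx <-] e /fx; rewrite near_withinE => /nbhs_ballP[d /= d0 xd].
exists d => // t /andP[t0 td].
have := xd t; rewrite -ball_normE /= sub0r normrN => /(_ td).
rewrite normr_gt0 in t0 => /(_ t0).
by rewrite distrC /= scaler1 [t + x]addrC mulrC.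
Qed.

Lemma normc_real (a : R) : `|a%:C| = `|a|%:C :> C.
Proof. by rewrite normc_def /= expr0n addr0 sqrtr_sqr. Qed.

Lemma normc_Re_Im (z : C) : `|z| <= (`|Re z| + `|Im z|)%:C.
Proof.
rewrite {1}[z]complexE rmorphD /=; apply: le_trans (ler_normD _ _) _.
rewrite normrM !normc_real (_ : `|'i%C| = 1) ?mul1r //.
by rewrite normc_def /= expr0n expr1n add0r sqrtr1.
Qed.

Lemma normcE (z : C) : `|z| = (Re `|z|)%:C.
Proof. by rewrite normc_def. Qed.

Lemma Re_normc_ge0 (z : C) : 0 <= Re `|z|.
Proof. by rewrite normc_def /= sqrtr_ge0. Qed.

Lemma ccontinuous_epsilon (F : R -> C) (x : R) : ccontinuous F ->
  forall e : R, 0 < e -> exists2 d : R, 0 < d &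
    forall y, `|y - x| < d -> `|F y - F x| < e%:C.
Proof.
move=> [F1 F2] e e0; have e20 : 0 < e / 2 by rewrite divr_gt0.
have [d1 d10 H1] := continuous_at_epsilon (F1 x) e20.
have [d2 d20 H2] := continuous_at_epsilon (F2 x) e20.
exists (Num.min d1 d2) => [|y]; first by rewrite lt_min d10 d20.
rewrite lt_min => /andP[/H1 y1 /H2 y2].
apply: le_lt_trans (normc_Re_Im _) _; rewrite ltcR cReD cImD cReN cImN; lra.
Qed.

Lemma is_cderive_epsilon (F : R -> C) (x : R) (dF : C) : is_cderive F x dF ->
  forall e : R, 0 < e -> exists2 d : R, 0 < d &
    forall t, 0 < `|t| < d -> `|(F (x + t) - F x) / t%:C - dF| < e%:C.
Proof.
move=> [F1 F2] e e0; have e20 : 0 < e / 2 by rewrite divr_gt0.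
have [d1 d10 H1] := is_derive_epsilon F1 e20.
have [d2 d20 H2] := is_derive_epsilon F2 e20.
exists (Num.min d1 d2) => [|t]; first by rewrite lt_min d10 d20.
rewrite lt_min => /andP[t0 /andP[td1 td2]].
have := H1 t; rewrite t0 td1 => /(_ isT) h1.
have := H2 t; rewrite t0 td2 => /(_ isT) h2.
apply: le_lt_trans (normc_Re_Im _) _; rewrite -fmorphV ltcR cReD cImD cReN cImN.
rewrite cReMr cImMr cReD cImD cReN cImN; lra.
Qed.

End EpsilonDelta.

Section EpsTensor.
Variable R : realType.
Local Notation C := R[i].
Local Notation Re := (@complex.Re R).

Definition bounded11 (q : R -> C) : Prop :=
  exists2 B : R, 0 <= B & forall x, -1 <= x <= 1 -> `|q x| <= B%:C.

Lemma bounded11Z (a : C) (q : R -> C) : bounded11 q -> bounded11 (fun x => a * q x).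
Proof.
move=> [B B0 qB]; exists (Re `|a| * B) => [|x /qB qxB].
  exact: mulr_ge0 (Re_normc_ge0 a) B0.
rewrite normrM; apply: le_trans (ler_wpM2l (normr_ge0 a) qxB) _.
by rewrite {1}normcE rmorphM.
Qed.

Lemma norm_cexp_le (z : C) (x : R) : -1 <= x <= 1 ->
  `|cexp (z * x%:C)| <= (expR `|Re z|)%:C.
Proof.
move=> /andP[x1 x2]; rewrite norm_cexp lecR ler_expR cReMr.
apply: le_trans (ler_norm _) _; rewrite normrM -[leRHS]mulr1 ler_wpM2l //.
by rewrite ler_norml; lra.
Qed.

Lemma bounded11_qfun (N : nat) (rho : 'I_N -> C) (Gam : 'cV[C]_(N + N)) :
  bounded11 (qfun rho Gam).
Proof.
exists (\sum_(l < N) (Re `|Gam (lshift N l) 0| + Re `|Gam (rshift N l) 0|)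
            * expR `|Re (rho l)|) => [|x x11].
  apply: sumr_ge0 => l _; apply: mulr_ge0; last exact/ltW/expR_gt0.
  by apply: addr_ge0; apply: Re_normc_ge0.
rewrite /qfun rmorph_sum; apply: le_trans (ler_norm_sum _ _ _) _; apply: ler_sum => l _.
apply: le_trans (ler_normD _ _) _.
rewrite (normrM (Gam (lshift N l) 0)) (normrM (Gam (rshift N l) 0)).
rewrite {1}[`|Gam (lshift N l) 0|]normcE {1}[`|Gam (rshift N l) 0|]normcE.
have := norm_cexp_le (- rho l) x11; rewrite cReN normrN => eN.
rewrite rmorphM rmorphD mulrDl.
by apply: lerD; apply: ler_wpM2l; rewrite ?ler0c ?Re_normc_ge0 //; exact: norm_cexp_le.
Qed.

Lemma ccontinuous_qfun (N : nat) (rho : 'I_N -> C) (Gam : 'cV[C]_(N + N)) :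
  ccontinuous (qfun rho Gam).
Proof.
apply: ccontinuous_sum => l _.
by apply: ccontinuousD; apply: ccontinuousM;
  apply: ccontinuous_cst || apply: ccontinuous_cexp.
Qed.

Lemma norm_mul_le (a b : C) (e B : R) : 0 <= B -> 0 < e ->
  `|a| < (e / (B + 1))%:C -> `|b| <= B%:C -> `|a * b| <= e%:C.
Proof.
move=> B0 e0 ae bB; rewrite normrM.
apply: le_trans (ler_pM (normr_ge0 _) (normr_ge0 _) (ltW ae) bB) _.
rewrite -rmorphM lecR mulrAC ler_pdivrMr ?ler_pM2l //; lra.
Qed.

Lemma in_Y_ccontinuous (q : R -> C) : ccontinuous q -> in_Y q.
Proof.
move=> cq x _ e e0; have [d d0 qd] := ccontinuous_epsilon x cq e0.
by exists d => // y _; apply: qd.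
Qed.

Lemma in_X_eps_tensor (h : R) (lam : C) (q : R -> C) : ccontinuous q -> bounded11 q ->
  in_X h (eps_tensor lam q).
Proof.
move=> cq [B B0 qB]; split => th _.
  by apply/in_Y_ccontinuous/ccontinuousM => //; apply: ccontinuous_cst.
move=> e e0; have eB : 0 < e / (B + 1) by rewrite divr_gt0 //; lra.
have [d d0 Ed] := ccontinuous_epsilon th (ccontinuous_cexp lam) eB.
exists d => // th' _ th'd x x11.
by rewrite /eps_tensor -mulrBl; exact: norm_mul_le B0 e0 (Ed th' th'd) (qB x x11).
Qed.

Lemma is_derX_eps_tensor (h : R) (lam : C) (q : R -> C) : bounded11 q ->
  is_derX h (eps_tensor lam q) (fun th x => lam * eps_tensor lam q th x).
Proof.
move=> [B B0 qB] th _ e e0; have eB : 0 < e / (B + 1) by rewrite divr_gt0 //; lra.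
have [d d0 Ed] := is_cderive_epsilon (is_cderive_cexp lam th) eB.
exists d => // t _ td x x11; rewrite /eps_tensor.
rewrite (_ : _ - _ = ((cexp (lam * (th + t)%:C) - cexp (lam * th%:C)) / t%:C
                      - lam * cexp (lam * th%:C)) * q x); last by ring.
exact: norm_mul_le B0 e0 (Ed t td) (qB x x11).
Qed.

End EpsTensor.

Lemma Vandermonde_mulmx_eq0 (F : fieldType) (M : nat) (w : 'rV[F]_M) (v : 'cV[F]_M) :
  injective (w 0) -> Vandermonde M w *m v = 0 -> v = 0.
Proof.
move=> w_inj Vv0; suff Vu : Vandermonde M w \in unitmx.
  by rewrite -(mulKmx Vu v) Vv0 mulmx0.
rewrite unitmxE unitfE det_Vandermonde; apply/prodf_neq0 => i _; apply/prodf_neq0 => j ij.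
by rewrite subr_eq0; apply: contraTneq ij => /w_inj ->; rewrite ltnn.
Qed.

Section ExpIndependence.
Variable R : realType.
Local Notation C := R[i].
Local Notation Re := (@complex.Re R).
Local Notation Im := (@complex.Im R).

Lemma sin_eq0_lt2 (y : R) : `|y| < 2 -> sin y = 0 -> y = 0.
Proof.
move=> y2 siny; have [y0|y0|//] := ltgtP y 0.
- suff : 0 < sin (- y) by rewrite sinN siny oppr0 ltxx.
  by apply: sin2_gt0; rewrite oppr_gt0 y0 -(ltr0_norm y0).
- suff : 0 < sin y by rewrite siny ltxx.
  by apply: sin2_gt0; rewrite y0 -(gtr0_norm y0).
Qed.

Lemma cexp_eq1_lt2 (u : C) (d : R) : 0 < d -> `|Im u| * d < 2 ->
  cexp (u * d%:C) = 1 -> u = 0.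
Proof.
move=> d0 ud2 ud1; have := congr1 Im ud1; have := congr1 Re ud1.
rewrite Re_cexp Im_cexp cReMr cImMr /= => Re1 /eqP.
rewrite mulf_eq0 expR_eq0 /= => /eqP /sin_eq0_lt2 Imud0.
have {}Imud0 : Im u * d = 0 by apply: Imud0; rewrite normrM (gtr0_norm d0).
move: Re1; rewrite Imud0 cos0 mulr1 -expR0 => /expR_inj Reud0.
move: Imud0 Reud0 => /eqP; rewrite mulf_eq0 (gt_eqF d0) orbF => /eqP Imu0 /eqP.
rewrite mulf_eq0 (gt_eqF d0) orbF => /eqP Reu0.
by apply: complex_eqP; rewrite ?Imu0 ?Reu0.
Qed.

Lemma cexp_natmul (z : C) (n : nat) (d : R) :
  cexp (z * (n%:R * d)%:C) = cexp (z * d%:C) ^+ n.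
Proof. by rewrite -cexpMn rmorphM rmorph_nat mulrCA mulr_natl. Qed.

(* Sampling at x = n d for n < M, with d small enough that the values
   e^{a_t d} stay distinct, turns the sum into a Vandermonde system. *)
Lemma cexp_sum_neq0 (M : nat) (a : 'rV[C]_M) (v : 'cV[C]_M) :
  injective (a 0) -> v != 0 ->
  exists2 x : R, -1 <= x <= 1 & \sum_(t < M) v t 0 * cexp (a 0 t * x%:C) != 0.
Proof.
case: M a v => [|M] a v a_inj v0; first by rewrite flatmx0 eqxx in v0.
set S := \sum_(s < M.+1) \sum_(t < M.+1) `|Im (a 0 s - a 0 t)|.
have S0 : 0 <= S by apply: sumr_ge0 => s _; apply: sumr_ge0.
have M0 : 1 <= (M.+1)%:R :> R by rewrite ler1n.
pose d := ((M.+1)%:R + S)^-1.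
have d0 : 0 < d by rewrite invr_gt0; lra.
have Md1 : (M.+1)%:R * d <= 1 by rewrite ler_pdivrMr; lra.
have Sd1 : S * d < 1 by rewrite ltr_pdivrMr; lra.
have Ima_small s t : `|Im (a 0 s - a 0 t)| * d < 2.
  have : `|Im (a 0 s - a 0 t)| <= S.
    rewrite /S (bigD1 s) //= (bigD1 t) //= -addrA lerDl.
    by apply: addr_ge0; apply: sumr_ge0 => *; [apply: normr_ge0 | apply: sumr_ge0].
  by move/(ler_wpM2r (ltW d0)); lra.
pose w := \row_t cexp (a 0 t * d%:C).
have w_inj : injective (w 0).
  move=> s t; rewrite !mxE => wst; apply: a_inj; apply/eqP; rewrite -subr_eq0; apply/eqP.
  apply: cexp_eq1_lt2 d0 (Ima_small s t) _.
  by rewrite mulrBl cexpD cexpN wst mulfV ?cexp_neq0.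
have [/existsP[n sn]|/existsPn sum0] :=
  boolP [exists n : 'I_M.+1, \sum_t v t 0 * cexp (a 0 t * (n%:R * d)%:C) != 0].
  exists (n%:R * d) => //; apply/andP; split.
    by apply: le_trans (_ : 0 <= _); [lra | apply: mulr_ge0 => //; lra].
  apply: le_trans Md1; apply: ler_wpM2r; first exact: ltW.
  by rewrite ler_nat ltnW.
suff Vv0 : Vandermonde M.+1 w *m v = 0.
  by rewrite (Vandermonde_mulmx_eq0 w_inj Vv0) eqxx in v0.
apply/matrixP => n j; rewrite ord1 !mxE -[RHS](eqP (negPn (sum0 n))).
by apply: eq_bigr => t _; rewrite !mxE cexp_natmul mulrC.
Qed.

End ExpIndependence.

Section Eigenfunction.
Variable R : realType.
Local Notation C := R[i].
Variables (N : nat) (rho : 'I_N -> C).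
Hypothesis rho_distinct : forall i j, i != j -> rho i != rho j /\ rho i != - rho j.
Hypothesis rho_neqN : forall i, rho i != - rho i.

Lemma qfun_neq0 (Gam : 'cV[C]_(N + N)) : Gam != 0 ->
  exists2 x : R, -1 <= x <= 1 & qfun rho Gam x != 0.
Proof.
move=> Gam0; pose a : 'rV[C]_(N + N) := row_mx (\row_l rho l) (\row_l - rho l).
have rho_inj : injective rho.
  move=> i j rij; apply/eqP/negP => /negP /rho_distinct[]; by rewrite rij eqxx.
have rhoN i j : rho i != - rho j.
  by have [->|/rho_distinct[]] := eqVneq i j.
have a_inj : injective (a 0).
  move=> s t; case: (split_ordP s) => {}s ->; case: (split_ordP t) => {}t ->;
    rewrite /a ?row_mxEl ?row_mxEr !mxE.
  - by move/rho_inj ->.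
  - by move/eqP; rewrite (negbTE (rhoN _ _)).
  - by move/esym/eqP; rewrite (negbTE (rhoN _ _)).
  - by move/oppr_inj/rho_inj ->.
have [x x11 qx] := cexp_sum_neq0 a_inj Gam0.
exists x => //; move: qx; rewrite big_split_ord /qfun big_split /= /a.
under eq_bigr do rewrite row_mxEl mxE.
by under [X in _ + X]eq_bigr do rewrite row_mxEr mxE.
Qed.

Variables (alpha tau0 : R) (c mu : 'I_N -> C) (lam : C).
Hypothesis Prho0 : forall l, Pchar alpha tau0 c mu lam (rho l) = 0.
Hypothesis krho : forall l i, kk mu lam i != rho l /\ kk mu lam i != - rho l.

Lemma is_eigenfunction_qfun (Gam : 'cV[C]_(N + N)) :
  0 <= tau0 -> Gam != 0 -> Smat mu lam rho *m Gam = 0 ->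
  is_eigenfunction alpha tau0 c mu lam (eps_tensor lam (qfun rho Gam)).
Proof.
move=> tau0_ge0 Gam0 SGam0.
have phi0 x : eps_tensor lam (qfun rho Gam) 0 x = qfun rho Gam x.
  by rewrite /eps_tensor mulr0 cexp0 mul1r.
split; last first.
  have [x x11 qx] := qfun_neq0 Gam0.
  by exists 0, x; rewrite phi0 lexx andbT oppr_le0 x11 qx; split => //; lra.
split.
- exact/in_X_eps_tensor/bounded11_qfun/ccontinuous_qfun.
- have -> : (fun th x => lam * eps_tensor lam (qfun rho Gam) th x) =
      eps_tensor lam (fun x => lam * qfun rho Gam x).
    by apply: funext => th; apply: funext => x; rewrite /eps_tensor mulrCA.
  apply: in_X_eps_tensor; last exact/bounded11Z/bounded11_qfun.
  by apply: ccontinuousM; [apply: ccontinuous_cst | apply: ccontinuous_qfun].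
- exact/is_derX_eps_tensor/bounded11_qfun.
- by move=> x x11; rewrite !phi0 (Lop_eps_tensor_qfun (alpha := alpha) x11) //; ring.
Qed.

End Eigenfunction.

Theorem theorem3p17 (R : realType) (N : nat) (alpha tau0 : R)
    (c mu : 'I_N -> R[i]) (lam : R[i]) (rho : 'I_N -> R[i]) :
  (0 < N)%N -> 0 < alpha -> 0 <= tau0 ->
  (forall i, c i != 0) ->
  injective mu ->
  (* lam not in the exceptional set S *)
  (forall i j : 'I_N, i != j -> kk mu lam i ^+ 2 != kk mu lam j ^+ 2) ->
  (* P has 2N distinct roots, namely +- rho_i *)
  (forall i j : 'I_N, i != j -> rho i != rho j /\ rho i != - rho j) ->
  (forall i : 'I_N, rho i != - rho i) ->
  (forall z : R[i], Pchar alpha tau0 c mu lam z = 0 <->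
                    exists i, z = rho i \/ z = - rho i) ->
  \det (Smat mu lam rho) = 0 ->
  (forall i j : 'I_N, kk mu lam j != rho i /\ kk mu lam j != - rho i) ->
  in_point_spectrum alpha tau0 c mu lam /\
  (forall Gam : 'cV[R[i]]_(N + N), Gam != 0 -> Smat mu lam rho *m Gam = 0 ->
     is_eigenfunction alpha tau0 c mu lam (eps_tensor lam (qfun rho Gam))).
Proof.
move=> _ _ tau0_ge0 _ _ _ rho_distinct rho_neqN Proots detS0 krho.
have Prho0 l : Pchar alpha tau0 c mu lam (rho l) = 0 by apply/Proots; exists l; left.
have eigen := is_eigenfunction_qfun rho_distinct rho_neqN Prho0 krho tau0_ge0.
split => //.
have /det0P[v v0 vS0] : \det (Smat mu lam rho)^T == 0 by rewrite det_tr detS0.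
exists (eps_tensor lam (qfun rho v^T)); apply: eigen.
  by rewrite -(inj_eq (@trmx_inj _ _ _)) trmxK trmx0.
by apply: trmx_inj; rewrite trmx_mul trmxK vS0 trmx0.
Qed.
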